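(* Let $Q$ be an automorphic loop of nilpotency class $2$. Then $(ab,c,d)=(a,c,d)(b,c,d)$, $(a,bc,d)=(a,b,d)(a,c,d)$, and $(a,b,cd)=(a,b,c)(a,b,d)$ for every $a,b,c,d\in Q$.
   Context: A loop is a set with a binary operation such that all left and right translations $L_a:b\mapsto ab$, $R_a:b\mapsto ba$ are bijections and there is a two-sided identity $1$. The inner mapping group is the stabilizer of $1$ in the group generated by all translations; $Q$ is automorphic if all inner mappings are automorphisms. The associator $(a,b,c)$ is defined by $(ab)c=(a(bc))(a,b,c)$. The center $Z(Q)$ is the set of elements fixed by all inner mappings; $Z_0=1$, $Z_{i+1}(Q)$ is the preimage of $Z(Q/Z_i(Q))$, and $Q$ has nilpotency class $n$ if $Z_{n-1}(Q)\neq Q=Z_n(Q)$. *)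

From Stdlib Require Import ClassicalEpsilon.

Set Implicit Arguments.

Record lops := LOps {
  lcar :> Type;
  lmul : lcar -> lcar -> lcar;
  lldiv : lcar -> lcar -> lcar;   (* a \ b : the unique x with a x = b *)
  lrdiv : lcar -> lcar -> lcar;   (* b / a : the unique x with x a = b *)
  lone : lcar
}.

Arguments lmul {l} _ _.
Arguments lldiv {l} _ _.
Arguments lrdiv {l} _ _.
Arguments lone {l}.

Definition is_loop (Q : lops) : Prop :=
  (forall a b : Q, lmul a (lldiv a b) = b) /\
  (forall a b : Q, lldiv a (lmul a b) = b) /\
  (forall a b : Q, lmul (lrdiv b a) a = b) /\
  (forall a b : Q, lrdiv (lmul b a) a = b) /\
  (forall a : Q, lmul lone a = a) /\
  (forall a : Q, lmul a lone = a).

(* The multiplication group: the group of permutations generated by all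
   left and right translations (generated as a monoid by the translations
   and their inverses). *)
Inductive mlt (Q : lops) : (Q -> Q) -> Prop :=
  | mlt_id : mlt Q (fun x => x)
  | mlt_L a f : mlt Q f -> mlt Q (fun x => lmul a (f x))
  | mlt_R a f : mlt Q f -> mlt Q (fun x => lmul (f x) a)
  | mlt_Linv a f : mlt Q f -> mlt Q (fun x => lldiv a (f x))
  | mlt_Rinv a f : mlt Q f -> mlt Q (fun x => lrdiv (f x) a).
Arguments mlt {Q} _.

Definition inner {Q : lops} (f : Q -> Q) : Prop := mlt f /\ f lone = lone.

(* Automorphic loop: every inner mapping is an automorphism
   (inner mappings are bijections, being in the multiplication group). *)
Definition automorphic (Q : lops) : Prop :=
  forall f : Q -> Q, inner f -> forall x y : Q, f (lmul x y) = lmul (f x) (f y).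

Definition center {Q : lops} (x : Q) : Prop := forall f : Q -> Q, inner f -> f x = x.

(* Quotient Q/N: carrier = left cosets xN, operations via representatives. *)
Section Quotient.
Variables (Q : lops) (N : Q -> Prop).

Definition coset (x : Q) : Q -> Prop := fun z => exists n, N n /\ z = lmul x n.

Definition qcar : Type := {C : Q -> Prop | exists x, C = coset x}.

Definition qclass (x : Q) : qcar := exist _ (coset x) (ex_intro _ x eq_refl).

Definition qrep (C : qcar) : Q :=
  proj1_sig (constructive_indefinite_description _ (proj2_sig C)).

Definition quot : lops :=
  @LOps qcar
    (fun C D => qclass (lmul (qrep C) (qrep D)))
    (fun C D => qclass (lldiv (qrep C) (qrep D)))
    (fun C D => qclass (lrdiv (qrep C) (qrep D)))
    (qclass lone).
End Quotient.

Fixpoint zcent (Q : lops) (i : nat) : Q -> Prop :=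
  match i with
  | 0 => fun x => x = lone
  | S i => fun x => @center (@quot Q (zcent Q i)) (@qclass Q (zcent Q i) x)
  end.

Definition nilpotency_class (Q : lops) (n : nat) : Prop :=
  (exists x : Q, ~ zcent Q (Nat.pred n) x) /\ (forall x : Q, zcent Q n x).

(* Associator: (ab)c = (a(bc)) (a,b,c). *)
Definition associator {Q : lops} (a b c : Q) : Q :=
  lldiv (lmul a (lmul b c)) (lmul (lmul a b) c).

(** Class 2 means that every inner mapping [g] moves each [x] by a central
    element: [g x = x k(x)].  As [g] is an automorphism and [k] takes central
    values, [k] is a homomorphism into the center.  Each associator, viewed as a
    function of one argument with the other two fixed, is [k] (or its inverse)
    for a suitable inner mapping, hence it is multiplicative in that argument. *)

From Stdlib Require Import FunctionalExtensionality PropExtensionality ProofIrrelevance ClassicalEpsilon.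

Section Loop.
Variable Q : lops.
Hypothesis loopQ : is_loop Q.

Lemma lmul_ldiv (a b : Q) : lmul a (lldiv a b) = b.
Proof. apply loopQ. Qed.

Lemma lldiv_mul (a b : Q) : lldiv a (lmul a b) = b.
Proof. apply loopQ. Qed.

Lemma lmul_rdiv (a b : Q) : lmul (lrdiv b a) a = b.
Proof. apply loopQ. Qed.

Lemma lrdiv_mul (a b : Q) : lrdiv (lmul b a) a = b.
Proof. apply loopQ. Qed.

Lemma lmul1l (a : Q) : lmul lone a = a.
Proof. apply loopQ. Qed.

Lemma lmul1r (a : Q) : lmul a lone = a.
Proof. apply loopQ. Qed.

Lemma lmul_injl (a b c : Q) : lmul a b = lmul a c -> b = c.
Proof. intros E. rewrite <- (lldiv_mul a b), E. apply lldiv_mul. Qed.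

Lemma lmul_injr (a b c : Q) : lmul b a = lmul c a -> b = c.
Proof. intros E. rewrite <- (lrdiv_mul a b), E. apply lrdiv_mul. Qed.

Lemma lldiv_self (a : Q) : lldiv a a = lone.
Proof. rewrite <- (lmul1r a) at 2. apply lldiv_mul. Qed.

Lemma lrdiv_self (a : Q) : lrdiv a a = lone.
Proof. rewrite <- (lmul1l a) at 1. apply lrdiv_mul. Qed.

(** A fixed point of [tinner x] commutes with [x]; fixed points of [rinner],
    [minner], [linner] associate in the left, middle, right position. *)

Definition tinner (x z : Q) : Q := lldiv x (lmul z x).
Definition rinner (x y z : Q) : Q := lrdiv (lmul (lmul z x) y) (lmul x y).
Definition minner (x y z : Q) : Q := lrdiv (lldiv x (lmul (lmul x z) y)) y.
Definition linner (x y z : Q) : Q := lldiv (lmul x y) (lmul x (lmul y z)).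

Lemma inner_tinner (x : Q) : inner (tinner x).
Proof. split; [repeat constructor|]. unfold tinner. rewrite lmul1l. apply lldiv_self. Qed.

Lemma inner_rinner (x y : Q) : inner (rinner x y).
Proof. split; [repeat constructor|]. unfold rinner. rewrite lmul1l. apply lrdiv_self. Qed.

Lemma inner_minner (x y : Q) : inner (minner x y).
Proof.
  split; [repeat constructor|]. unfold minner.
  rewrite lmul1r, lldiv_mul. apply lrdiv_self.
Qed.

Lemma inner_linner (x y : Q) : inner (linner x y).
Proof. split; [repeat constructor|]. unfold linner. rewrite lmul1r. apply lldiv_self. Qed.

Lemma center1 : center (@lone Q).
Proof. intros f [_ f1]. exact f1. Qed.

Section Central.
Variable z : Q.
Hypothesis zC : center z.

Lemma center_mulC (a : Q) : lmul z a = lmul a z.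
Proof.
  rewrite <- (zC _ (inner_tinner a)) at 2. unfold tinner. now rewrite lmul_ldiv.
Qed.

Lemma center_mulAl (a b : Q) : lmul (lmul z a) b = lmul z (lmul a b).
Proof.
  rewrite <- (zC _ (inner_rinner a b)) at 2. unfold rinner. now rewrite lmul_rdiv.
Qed.

Lemma center_mulAm (a b : Q) : lmul (lmul a z) b = lmul a (lmul z b).
Proof.
  rewrite <- (zC _ (inner_minner a b)) at 2. unfold minner.
  now rewrite lmul_rdiv, lmul_ldiv.
Qed.

Lemma center_mulAr (a b : Q) : lmul (lmul a b) z = lmul a (lmul b z).
Proof.
  rewrite <- (zC _ (inner_linner a b)) at 1. unfold linner. now rewrite lmul_ldiv.
Qed.

End Central.

Lemma lmul_centerACA (x y n m : Q) : center n -> center m ->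
  lmul (lmul x n) (lmul y m) = lmul (lmul x y) (lmul n m).
Proof.
  intros nC mC.
  rewrite <- (center_mulAr m mC), (center_mulAm n nC), (center_mulC n nC).
  rewrite <- (center_mulAr n nC). apply center_mulAr, mC.
Qed.

Definition central_subloop (N : Q -> Prop) : Prop :=
  (forall n, N n -> center n) /\ N lone /\
  (forall n m, N n -> N m -> N (lmul n m)) /\
  (forall n m, N n -> N m -> N (lldiv n m)).

Section Quotient.
Variable N : Q -> Prop.
Hypothesis NC : central_subloop N.

Let cl : Q -> quot Q N := qclass Q N.

Lemma NC_center (n : Q) : N n -> center n.
Proof. apply NC. Qed.

Lemma coset_mulN (x n : Q) : N n -> coset Q N (lmul x n) = coset Q N x.
Proof.
  destruct NC as [N_center [_ [N_mul N_ldiv]]]. intros Nn.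
  apply functional_extensionality; intros y; apply propositional_extensionality.
  split; intros [m [Nm ->]].
  - exists (lmul n m). split; [auto|]. apply center_mulAm; auto.
  - exists (lldiv n m). split; [auto|]. rewrite center_mulAm, lmul_ldiv; auto.
Qed.

Lemma qclass_mulN (x n : Q) : N n -> cl (lmul x n) = cl x.
Proof.
  intros Nn. apply eq_sig_hprop; [intros; apply proof_irrelevance|].
  exact (coset_mulN x n Nn).
Qed.

Lemma qclass_eqN (x y : Q) : cl x = cl y -> exists n, N n /\ y = lmul x n.
Proof.
  intros E. apply (f_equal (@proj1_sig _ _)) in E.
  assert (yy : coset Q N y y) by (exists lone; split; [apply NC | now rewrite lmul1r]).
  simpl in E. rewrite <- E in yy. exact yy.
Qed.

Lemma qclass_qrep (C : quot Q N) : cl (qrep C) = C.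
Proof.
  apply eq_sig_hprop; [intros; apply proof_irrelevance|]. unfold qrep.
  destruct (constructive_indefinite_description _ _) as [r Er]. symmetry. exact Er.
Qed.

Lemma qrep_qclass (x : Q) : exists n, N n /\ qrep (cl x) = lmul x n.
Proof. apply qclass_eqN. symmetry. apply qclass_qrep. Qed.

Lemma qclass_mul (x y : Q) : @lmul (quot Q N) (cl x) (cl y) = cl (lmul x y).
Proof.
  simpl. destruct (qrep_qclass x) as [n [Nn ->]], (qrep_qclass y) as [m [Nm ->]].
  rewrite lmul_centerACA by (apply NC_center; auto).
  apply qclass_mulN. apply NC; auto.
Qed.

Lemma qclass_ldiv (x y : Q) : @lldiv (quot Q N) (cl x) (cl y) = cl (lldiv x y).
Proof.
  simpl. destruct (qrep_qclass x) as [n [Nn ->]], (qrep_qclass y) as [m [Nm ->]].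
  assert (Nnm : N (lldiv n m)) by (apply NC; auto).
  replace (lldiv (lmul x n) (lmul y m)) with (lmul (lldiv x y) (lldiv n m)).
  - now apply qclass_mulN.
  - apply (lmul_injl (lmul x n)).
    rewrite lmul_ldiv, lmul_centerACA by (apply NC_center; auto).
    now rewrite !lmul_ldiv.
Qed.

Lemma qclass_rdiv (x y : Q) : @lrdiv (quot Q N) (cl y) (cl x) = cl (lrdiv y x).
Proof.
  simpl. destruct (qrep_qclass x) as [n [Nn ->]], (qrep_qclass y) as [m [Nm ->]].
  assert (Nnm : N (lldiv n m)) by (apply NC; auto).
  replace (lrdiv (lmul y m) (lmul x n)) with (lmul (lrdiv y x) (lldiv n m)).
  - now apply qclass_mulN.
  - apply (lmul_injr (lmul x n)).
    rewrite lmul_rdiv, lmul_centerACA, lmul_rdiv by (apply NC_center; auto).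
    now rewrite <- (center_mulC n), lmul_ldiv by (apply NC_center; auto).
Qed.

Lemma mlt_quot (g : Q -> Q) : mlt g ->
  exists f : quot Q N -> quot Q N, mlt f /\ forall y, f (cl y) = cl (g y).
Proof.
  induction 1 as [|a g _ [f [Mf Ef]]|a g _ [f [Mf Ef]]|a g _ [f [Mf Ef]]|a g _ [f [Mf Ef]]].
  - exists (fun C => C). split; [constructor | reflexivity].
  - exists (fun C => lmul (cl a) (f C)). split; [now constructor|].
    intros y. rewrite Ef. apply qclass_mul.
  - exists (fun C => lmul (f C) (cl a)). split; [now constructor|].
    intros y. rewrite Ef. apply qclass_mul.
  - exists (fun C => lldiv (cl a) (f C)). split; [now constructor|].
    intros y. rewrite Ef. apply qclass_ldiv.
  - exists (fun C => lrdiv (f C) (cl a)). split; [now constructor|].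
    intros y. rewrite Ef. apply qclass_rdiv.
Qed.

Lemma mlt_lift (f : quot Q N -> quot Q N) : mlt f ->
  exists g : Q -> Q, mlt g /\ forall y, f (cl y) = cl (g y).
Proof.
  induction 1 as [|a f _ [g [Mg Eg]]|a f _ [g [Mg Eg]]|a f _ [g [Mg Eg]]|a f _ [g [Mg Eg]]];
    [exists (fun x => x); split; [constructor | reflexivity]|..];
    rewrite <- (qclass_qrep a).
  - exists (fun x => lmul (qrep a) (g x)). split; [now constructor|].
    intros y. rewrite Eg. apply qclass_mul.
  - exists (fun x => lmul (g x) (qrep a)). split; [now constructor|].
    intros y. rewrite Eg. apply qclass_mul.
  - exists (fun x => lldiv (qrep a) (g x)). split; [now constructor|].
    intros y. rewrite Eg. apply qclass_ldiv.
  - exists (fun x => lrdiv (g x) (qrep a)). split; [now constructor|].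
    intros y. rewrite Eg. apply qclass_rdiv.
Qed.

Lemma center_qclassP (x : Q) :
  center (cl x) <-> forall g, inner g -> exists n, N n /\ g x = lmul x n.
Proof.
  split.
  - intros xC g [Mg g1].
    destruct (mlt_quot g Mg) as [f [Mf Ef]].
    apply qclass_eqN. rewrite <- Ef. symmetry. apply xC.
    split; [exact Mf|]. change (f (cl lone) = cl lone). now rewrite Ef, g1.
  - intros gx f [Mf f1].
    destruct (mlt_lift f Mf) as [g [Mg Eg]].
    change (f (cl lone) = cl lone) in f1. rewrite Eg in f1.
    destruct (qclass_eqN _ _ (eq_sym f1)) as [n [Nn g1]]. rewrite lmul1l in g1.
    (* [g] need not fix 1, but [g] followed by division by [g 1] does. *)
    assert (Ig' : inner (fun y => lrdiv (g y) (g lone))).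
    { split; [now constructor | apply lrdiv_self]. }
    destruct (gx _ Ig') as [m [Nm gx']].
    rewrite Eg, <- (lmul_rdiv (g lone) (g x)), gx', g1, center_mulAm by (apply NC_center; auto).
    apply qclass_mulN. apply NC; auto.
Qed.

End Quotient.

Lemma central_subloop_zcent0 : central_subloop (zcent Q 0).
Proof.
  repeat split; simpl.
  - intros n ->. apply center1.
  - intros n m -> ->. apply lmul1l.
  - intros n m -> ->. apply lldiv_self.
Qed.

Lemma zcent1P (x : Q) : zcent Q 1 x <-> center x.
Proof.
  change (@center (quot Q (zcent Q 0)) (qclass Q (zcent Q 0) x) <-> center x).
  rewrite (center_qclassP _ central_subloop_zcent0). split.
  - intros gx g Ig. destruct (gx g Ig) as [n [n1 ->]]. simpl in n1. subst n. apply lmul1r.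
  - intros xC g Ig. exists lone. split; [reflexivity|]. rewrite lmul1r. apply xC, Ig.
Qed.

Section Automorphic.
Hypothesis autoQ : automorphic Q.

Lemma center_mul (n m : Q) : center n -> center m -> center (lmul n m).
Proof. intros nC mC f If. now rewrite (autoQ f If), (nC f If), (mC f If). Qed.

Lemma center_ldiv (n m : Q) : center n -> center m -> center (lldiv n m).
Proof.
  intros nC mC f If. apply (lmul_injl n).
  rewrite lmul_ldiv. rewrite <- (nC f If) at 1. rewrite <- (autoQ f If), lmul_ldiv.
  apply mC, If.
Qed.

Lemma center_ldiv1_mul (n m : Q) : center n -> center m ->
  lldiv (lmul n m) lone = lmul (lldiv n lone) (lldiv m lone).
Proof.
  intros nC mC. apply (lmul_injl (lmul n m)).
  rewrite lmul_ldiv, <- lmul_centerACA by (apply center_ldiv; auto using center1).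
  now rewrite !lmul_ldiv, lmul1l.
Qed.

Lemma central_subloop_zcent1 : central_subloop (zcent Q 1).
Proof.
  repeat split; intros; repeat rewrite zcent1P in *;
    auto using center1, center_mul, center_ldiv.
Qed.

Definition displacement (g : Q -> Q) (x : Q) : Q := lldiv x (g x).

Section Class2.
Hypothesis class2 : forall x : Q, zcent Q 2 x.
Variable g : Q -> Q.
Hypothesis Ig : inner g.

Lemma center_displacement (x : Q) : center (displacement g x).
Proof.
  assert (xZ2 : @center (quot Q (zcent Q 1)) (qclass Q (zcent Q 1) x)) by apply class2.
  destruct (proj1 (center_qclassP _ central_subloop_zcent1 x) xZ2 g Ig) as [n [nZ1 gx]].
  unfold displacement. rewrite gx, lldiv_mul.
  now apply zcent1P.
Qed.

Lemma displacement_mul (x y : Q) :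
  displacement g (lmul x y) = lmul (displacement g x) (displacement g y).
Proof.
  unfold displacement. apply (lmul_injl (lmul x y)).
  rewrite <- lmul_centerACA by apply center_displacement.
  now rewrite !lmul_ldiv, (autoQ g Ig).
Qed.

Lemma inner_displacement (x : Q) : g x = lmul x (displacement g x).
Proof. unfold displacement. now rewrite lmul_ldiv. Qed.

End Class2.

Section Associators.
Hypothesis class2 : forall x : Q, zcent Q 2 x.

Lemma associator_rinner (x c d : Q) :
  associator x c d = displacement (rinner c d) x.
Proof.
  assert (kC := center_displacement class2 _ (inner_rinner c d) x).
  unfold associator. rewrite <- (lmul_rdiv (lmul c d) (lmul (lmul x c) d)).
  fold (rinner c d x). rewrite (inner_displacement (rinner c d) x) at 1.
  rewrite (center_mulAm _ kC), (center_mulC _ kC), <- (center_mulAr _ kC).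
  apply lldiv_mul.
Qed.

Lemma associator_minner (a x d : Q) :
  associator a x d = displacement (minner a d) x.
Proof.
  assert (kC := center_displacement class2 _ (inner_minner a d) x).
  unfold associator.
  rewrite <- (lmul_ldiv a (lmul (lmul a x) d)), <- (lmul_rdiv d (lldiv a _)).
  fold (minner a d x). rewrite (inner_displacement (minner a d) x) at 1.
  rewrite (center_mulAm _ kC), (center_mulC _ kC), <- !(center_mulAr _ kC).
  apply lldiv_mul.
Qed.

Lemma associator_linner (a b x : Q) :
  associator a b x = lldiv (displacement (linner a b) x) lone.
Proof.
  set (k := displacement (linner a b) x).
  assert (kC : center k) by apply (center_displacement class2 _ (inner_linner a b)).
  unfold associator. rewrite <- (lmul_ldiv (lmul a b) (lmul a (lmul b x))).
  fold (linner a b x). rewrite (inner_displacement (linner a b) x), <- (center_mulAr _ kC).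
  apply (lmul_injl (lmul (lmul (lmul a b) x) k)).
  now rewrite lmul_ldiv, (center_mulAm _ kC), lmul_ldiv, lmul1r.
Qed.

End Associators.
End Automorphic.
End Loop.

Theorem proposition2p3 (Q : lops) :
  is_loop Q -> automorphic Q -> nilpotency_class Q 2 ->
  forall a b c d : Q,
    associator (lmul a b) c d = lmul (associator a c d) (associator b c d) /\
    associator a (lmul b c) d = lmul (associator a b d) (associator a c d) /\
    associator a b (lmul c d) = lmul (associator a b c) (associator a b d).
Proof.
  intros loopQ autoQ [_ class2] a b c d. split; [|split].
  - rewrite !(associator_rinner Q loopQ autoQ class2 _ c d).
    apply displacement_mul; auto using inner_rinner.
  - rewrite !(associator_minner Q loopQ autoQ class2 a _ d).
    apply displacement_mul; auto using inner_minner.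
  - rewrite !(associator_linner Q loopQ autoQ class2 a b).
    rewrite displacement_mul by auto using inner_linner.
    apply center_ldiv1_mul; auto; apply center_displacement; auto using inner_linner.
Qed.
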